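(* Let $p$ be a prime, and let $f:V_m\to\mathbb{F}_p$ be a dual-bent function and $g:V_n\to\mathbb{F}_p$ a non-dual-bent function, where $V_m,V_n$ are $\mathbb{F}_p$-vector spaces of dimensions $m,n$ with nondegenerate inner products. Then the direct sum $F:V_m\times V_n\to\mathbb{F}_p$, $F(x,y)=f(x)+g(y)$, is a non-dual-bent function.
   Context: Walsh transform of $f:V\to\mathbb{F}_p$ ($\dim V=N$): $\widehat f(b)=\sum_{x\in V}\epsilon_p^{f(x)-\langle b,x\rangle}$, $\epsilon_p=e^{2\pi i/p}$; on $V_m\times V_n$ use $\langle(a,b),(x,y)\rangle=\langle a,x\rangle+\langle b,y\rangle$. $f$ is bent if $|\widehat f(b)|=p^{N/2}$ for all $b$; then $\widehat f(b)=\zeta_bp^{N/2}\epsilon_p^{f^*(b)}$ for some $\zeta_b\in\{\pm1,\pm i\}$ (for $p=2$, $\zeta_b=1$ and $\epsilon_2^{f^*(b)}=(-1)^{f^*(b)}$), defining the dual $f^*$. A bent function is dual-bent if its dual is bent, and non-dual-bent if it is bent but its dual is not bent. *)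

From HB Require Import structures.
From mathcomp Require Import all_boot all_order all_algebra all_field.
Unset Printing Implicit Defensive.
Import Order.TTheory GRing.Theory Num.Theory.
Local Open Scope ring_scope.

(* epsilon_p = e^{2 pi i / p}: p.-root (-1) is the p-th root of -1 with
   minimal nonnegative argument, i.e. e^{i pi / p}; its square is e^{2 pi i/p}. *)
Definition epsp (p : nat) : algC := (p.-root (-1)) ^+ 2.

Definition walsh {p : nat} {V : finType} (ip : V -> V -> 'F_p)
  (f : V -> 'F_p) (b : V) : algC :=
  \sum_(x : V) epsp p ^+ (val (f x - ip b x)).

Definition bent (p N : nat) {V : finType} (ip : V -> V -> 'F_p) (f : V -> 'F_p) : Prop :=
  forall b : V, `|walsh ip f b| = sqrtC ((p ^ N)%:R).

Definition zeta_ok (p : nat) (z : algC) : Prop :=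
  if p == 2%N then z = 1 else (z = 1 \/ z = -1 \/ z = 'i \/ z = - 'i).

Definition is_dual (p N : nat) {V : finType} (ip : V -> V -> 'F_p)
  (f fs : V -> 'F_p) : Prop :=
  forall b : V, exists z : algC, zeta_ok p z /\
    walsh ip f b = z * sqrtC ((p ^ N)%:R) * epsp p ^+ (val (fs b)).

Definition dual_bent (p N : nat) {V : finType} (ip : V -> V -> 'F_p) (f : V -> 'F_p) : Prop :=
  bent p N ip f /\ exists fs, is_dual p N ip f fs /\ bent p N ip fs.

Definition non_dual_bent (p N : nat) {V : finType} (ip : V -> V -> 'F_p) (f : V -> 'F_p) : Prop :=
  bent p N ip f /\ exists fs, is_dual p N ip f fs /\ ~ bent p N ip fs.

Definition ipM {p m : nat} (M : 'M['F_p]_m) (b x : 'rV['F_p]_m) : 'F_p :=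
  (b *m M *m x^T) 0 0.

Definition ipP {p : nat} {V W : finType} (ip1 : V -> V -> 'F_p) (ip2 : W -> W -> 'F_p)
  (u v : V * W) : 'F_p := ip1 u.1 v.1 + ip2 u.2 v.2.

(* The Walsh transform of a direct sum factors as the product of the Walsh
   transforms of its summands, so the direct sum of bent functions is bent and
   the direct sum of their duals is a dual of it.  Evaluating the Walsh
   transform of that dual at (0, b) and cancelling the nonzero factor coming
   from the bent dual of f shows that if the dual of f ⊕ g were bent, so would
   be the dual of g. *)
From HB Require Import structures.
From mathcomp Require Import all_boot all_order all_algebra all_field.
From mathcomp Require Import ring.
Import Order.TTheory GRing.Theory Num.Theory.
Local Open Scope ring_scope.

Definition direct_sum {p : nat} {V W : finType} (f : V -> 'F_p) (g : W -> 'F_p)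
  (z : V * W) : 'F_p := f z.1 + g z.2.

Lemma epsp_expr_p (p : nat) : (0 < p)%N -> epsp p ^+ p = 1.
Proof.
move=> p_gt0; rewrite /epsp -exprM mulnC exprM rootCK //.
by rewrite -signr_odd expr0.
Qed.

(* The exponent [val a] is the representative in [0, p); adding in 'F_p
   reduces modulo p, which [epsp p] does not see since it is a p-th root of 1. *)
Lemma epsp_exprD (p : nat) (a b : 'F_p) : prime p ->
  epsp p ^+ val (a + b) = epsp p ^+ val a * epsp p ^+ val b.
Proof.
move=> p_pr; rewrite -exprD /= expr_mod // (Fp_cast p_pr).
exact/epsp_expr_p/prime_gt0.
Qed.

Lemma walsh_direct_sum (p : nat) (V W : finType) (ip1 : V -> V -> 'F_p)
    (ip2 : W -> W -> 'F_p) (f : V -> 'F_p) (g : W -> 'F_p) (u : V * W) :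
  prime p ->
  walsh (ipP ip1 ip2) (direct_sum f g) u = walsh ip1 f u.1 * walsh ip2 g u.2.
Proof.
move=> p_pr; rewrite /walsh big_distrlr pair_bigA; apply: eq_bigr => -[x y] _.
rewrite [RHS](esym (epsp_exprD _ _ _ p_pr)); congr (_ ^+ val _).
by rewrite /direct_sum /ipP /= opprD addrACA.
Qed.

Lemma sqrtC_natrX_add (p a b : nat) :
  sqrtC ((p ^ (a + b))%:R) = sqrtC ((p ^ a)%:R) * sqrtC ((p ^ b)%:R) :> algC.
Proof. by rewrite expnD natrM sqrtCM // qualifE /= ler0n. Qed.

Lemma zeta_ok_exprCi (p : nat) (z : algC) :
  p != 2%N -> zeta_ok p z <-> exists k, z = 'i ^+ k.
Proof.
rewrite /zeta_ok => /negPf ->; split.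
  by move=> [->|[->|[->|->]]]; [exists 0%N | exists 2%N | exists 1%N | exists 3%N];
    rewrite ?expr0 ?sqrCi ?expr1 // exprS sqrCi mulrN1.
have Ci4 : 'i ^+ 4 = 1 :> algC by rewrite (exprM _ 2 2) sqrCi sqrrN expr1n.
move=> [k ->]; rewrite -(expr_mod k Ci4).
have : (k %% 4 < 4)%N by rewrite ltn_pmod.
case: (k %% 4)%N => [|[|[|[|//]]]] _.
- by left; rewrite expr0.
- by right; right; left; rewrite expr1.
- by right; left; rewrite sqrCi.
- by right; right; right; rewrite exprS sqrCi mulrN1.
Qed.

Lemma zeta_okM (p : nat) (z1 z2 : algC) :
  zeta_ok p z1 -> zeta_ok p z2 -> zeta_ok p (z1 * z2).
Proof.
have [->|p_neq2] := eqVneq p 2%N; first by rewrite /zeta_ok /= => -> ->; rewrite mulr1.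
move=> /(zeta_ok_exprCi _ _ p_neq2) [a ->] /(zeta_ok_exprCi _ _ p_neq2) [b ->].
by apply/(zeta_ok_exprCi _ _ p_neq2); exists (a + b)%N; rewrite exprD.
Qed.

Section DirectSum.

Context {p m n : nat} {V W : finType}.
Context {ip1 : V -> V -> 'F_p} {ip2 : W -> W -> 'F_p}.
Hypothesis p_pr : prime p.

Lemma bent_direct_sum {f : V -> 'F_p} {g : W -> 'F_p} :
  bent p m ip1 f -> bent p n ip2 g ->
  bent p (m + n) (ipP ip1 ip2) (direct_sum f g).
Proof.
by move=> bf bg u; rewrite walsh_direct_sum // normrM bf bg sqrtC_natrX_add.
Qed.

Lemma is_dual_direct_sum {f fs : V -> 'F_p} {g gs : W -> 'F_p} :
  is_dual p m ip1 f fs -> is_dual p n ip2 g gs ->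
  is_dual p (m + n) (ipP ip1 ip2) (direct_sum f g) (direct_sum fs gs).
Proof.
move=> dfs dgs u; rewrite walsh_direct_sum //.
have [z1 [ok_z1 ->]] := dfs u.1; have [z2 [ok_z2 ->]] := dgs u.2.
exists (z1 * z2); split; first exact: zeta_okM.
rewrite /direct_sum epsp_exprD // sqrtC_natrX_add; ring.
Qed.

Lemma bent_direct_sum_r (a : V) {f : V -> 'F_p} {g : W -> 'F_p} :
  bent p m ip1 f -> bent p (m + n) (ipP ip1 ip2) (direct_sum f g) ->
  bent p n ip2 g.
Proof.
move=> bf bF b; have := bF (a, b).
rewrite walsh_direct_sum // normrM bf sqrtC_natrX_add; apply: mulfI.
by rewrite sqrtC_eq0 pnatr_eq0 expn_eq0 negb_and -lt0n prime_gt0.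
Qed.

End DirectSum.

Theorem theorem2 (p m n : nat) (hp : prime p)
  (M1 : 'M['F_p]_m) (M2 : 'M['F_p]_n)
  (hM1s : M1^T = M1) (hM1u : M1 \in unitmx)
  (hM2s : M2^T = M2) (hM2u : M2 \in unitmx)
  (f : 'rV['F_p]_m -> 'F_p) (g : 'rV['F_p]_n -> 'F_p) :
  dual_bent p m (ipM M1) f ->
  non_dual_bent p n (ipM M2) g ->
  non_dual_bent p (m + n) (ipP (ipM M1) (ipM M2)) (fun z => f z.1 + g z.2).
Proof.
move=> [bf [fs [dfs bfs]]] [bg [gs [dgs nbgs]]].
split; first exact: (bent_direct_sum hp bf bg).
exists (direct_sum fs gs); split; first exact: (is_dual_direct_sum hp dfs dgs).
by move=> bF; apply: nbgs; exact: (bent_direct_sum_r hp 0 bfs bF).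
Qed.
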